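(* Let $n_*>2$ be an integer and let $\phi(b)=\upsilon\log b\,[\log\log b]^{1+\varepsilon}$ for $b\ge n_*+1$, with $\upsilon,\varepsilon>0$ such that $\phi(n_*+1)>1$. Let $\mathsf{G}\in\mathbb{G}(n_*,\phi)$. Then for any $\theta>0$ there exists $\underline{\alpha}\ge0$ (possibly depending on $\theta,n_*,\upsilon,\varepsilon$) such that $\mathit{\Theta}(\alpha,\theta)<\infty$ whenever $\alpha>\underline{\alpha}$.
   Context: All graphs $\mathsf{G}=(\mathsf{V},\mathsf{E})$ are countable, connected, locally finite and undirected; $n(x)$ is the degree of $x$, $\rho$ the path distance, $o\in\mathsf{V}$ a fixed root. For $\alpha,\theta>0$: $\mathit{\Theta}(\alpha,\theta)=\sum_{x\in\mathsf{V}}\sum_{y\sim x}[n(x)n(y)]^\theta\exp[-\alpha\rho(o,x)]$. For an integer $n_*>2$ put $\mathsf{V}_*=\{x:n(x)\le n_*\}$ and $\mathsf{V}_*^c=\mathsf{V}\setminus\mathsf{V}_*$. For a strictly increasing $\phi:(n_*,+\infty)\to(0,+\infty)$, the family $\mathbb{G}(n_*,\phi)$ consists of the graphs such that $\rho(x,y)\ge\phi[\max\{n(x),n(y)\}]$ for all $x,y\in\mathsf{V}_*^c$ (no condition if $x$ or $y$ lies in $\mathsf{V}_*$). *)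

From Stdlib Require Import Reals List Arith ClassicalEpsilon.
Open Scope R_scope.

(* A locally finite undirected simple graph on a vertex type V is given by its
   neighbourhood function N : V -> list V (the list of neighbours of x). *)
Section Graph.
Context {V : Type} (N : V -> list V).

Definition adj (x y : V) : Prop := In y (N x).

Definition deg (x : V) : nat := length (N x).

Inductive walk : V -> V -> nat -> Prop :=
  | walk0 x : walk x x 0
  | walkS x y z k : adj x y -> walk y z k -> walk x z (S k).

Definition is_graph : Prop :=
  (exists f : V -> nat, forall x y, f x = f y -> x = y) /\
  (forall x, NoDup (N x)) /\
  (forall x, ~ adj x x) /\
  (forall x y, adj x y -> adj y x) /\
  (forall x y, exists k, walk x y k).

Definition dist (x y : V) : nat :=
  epsilon (inhabits 0%nat)
    (fun d => walk x y d /\ forall k, walk x y k -> (d <= k)%nat).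

Definition Theta_term (o : V) (alpha theta : R) (x : V) : R :=
  fold_right Rplus 0
    (map (fun y => Rpower (INR (deg x * deg y)) theta
                   * exp (- alpha * INR (dist o x))) (N x)).

(* Theta(alpha,theta) < infinity: the (nonnegative) series over the countable
   vertex set has uniformly bounded finite partial sums *)
Definition Theta_finite (o : V) (alpha theta : R) : Prop :=
  exists M : R, forall l : list V, NoDup l ->
    fold_right Rplus 0 (map (Theta_term o alpha theta) l) <= M.

Definition in_family (nstar : nat) (phi : R -> R) : Prop :=
  forall x y, x <> y -> (nstar < deg x)%nat -> (nstar < deg y)%nat ->
    phi (INR (Nat.max (deg x) (deg y))) <= INR (dist x y).

End Graph.

Definition phi_ll (upsilon eps : R) (b : R) : R :=
  upsilon * ln b * Rpower (ln (ln b)) (1 + eps).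

(* Call a vertex a hub if its degree exceeds n_*.  For distinct hubs w, y the defining condition
   of G(n_*, phi) gives ln n(w) <= k rho(w, y) with k = 1 / (upsilon (ln ln (n_* + 1))^(1+eps));
   hence hubs are never adjacent, and n(v) <= Z e^(k rho(o, v)) for a graph-dependent Z.
   To count the sphere of radius d around o, give o weight 1 and pass weights along shortest
   paths: a non-hub passes e^k psi to each of its at most n_* children, a hub passes e^k / n(v)
   to each of its (non-hub) children, and a hub child restarts at 1, which is at most e^k psi
   because hubs are far apart.  The total weight grows by at most n_* e^k per step while every
   weight stays above e^(-k d) / Z, so the sphere has at most Z (n_* e^(2k))^d vertices; with the
   degree bound, the d-th shell of Theta(alpha, theta) is O(q^d) with q < 1 as soon as
   alpha > ln n_* + (3 + 2 theta) k. *)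

From Stdlib Require Import Reals Lra Lia List Arith Classical ClassicalEpsilon.
Open Scope R_scope.

Section Walks.
Context {V : Type} (N : V -> list V).

Lemma walk_snoc x y z k : walk N x y k -> adj N y z -> walk N x z (S k).
Proof. induction 1; intros; econstructor; eauto; constructor. Qed.

Lemma walk_app x y z k m : walk N x y k -> walk N y z m -> walk N x z (k + m).
Proof. induction 1; intros; simpl; auto. econstructor; eauto. Qed.

Lemma walk_S_last x z k : walk N x z (S k) -> exists y, walk N x y k /\ adj N y z.
Proof.
  revert x. induction k as [|k IH]; intros x W; inversion W as [|? y ? ? Axy Wy]; subst.
  - inversion Wy; subst. exists x. split; [constructor | assumption].
  - destruct (IH _ Wy) as [w [Ww Awz]]. exists w. split; [econstructor; eauto | assumption].
Qed.

Lemma walk_rev :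
  (forall x y, adj N x y -> adj N y x) -> forall x y k, walk N x y k -> walk N y x k.
Proof. intros Hsym. induction 1; [constructor | eapply walk_snoc; eauto]. Qed.

End Walks.

Section Distance.
Context {V : Type} (N : V -> list V) (HG : is_graph N).

Let adj_sym x y : adj N x y -> adj N y x.
Proof. apply HG. Qed.

Let connected x y : exists k, walk N x y k.
Proof. apply HG. Qed.

Lemma dist_spec x y :
  walk N x y (dist N x y) /\ forall k, walk N x y k -> (dist N x y <= k)%nat.
Proof.
  unfold dist. apply epsilon_spec.
  destruct (dec_inh_nat_subset_has_unique_least_element (walk N x y)
              (fun n => classic _) (connected x y)) as [d [Hd _]].
  eauto.
Qed.

Lemma dist_walk x y : walk N x y (dist N x y).
Proof. apply dist_spec. Qed.

Lemma dist_min x y k : walk N x y k -> (dist N x y <= k)%nat.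
Proof. apply dist_spec. Qed.

Lemma dist_triangle x y z : (dist N x z <= dist N x y + dist N y z)%nat.
Proof. apply dist_min. eapply walk_app; apply dist_walk. Qed.

Lemma dist_sym x y : dist N x y = dist N y x.
Proof.
  apply Nat.le_antisymm; apply dist_min, walk_rev, dist_walk; exact adj_sym.
Qed.

Lemma dist_adj x y : adj N x y -> (dist N x y <= 1)%nat.
Proof. intros A. apply dist_min. econstructor; [exact A | constructor]. Qed.

Lemma dist_refl x : dist N x x = 0%nat.
Proof. pose proof (dist_min x x 0 (walk0 _ x)). lia. Qed.

Lemma dist_eq0 x y : dist N x y = 0%nat -> x = y.
Proof. intros D. pose proof (dist_walk x y) as W. rewrite D in W. now inversion W. Qed.

Lemma dist_S_pred o x d :
  dist N o x = S d -> exists y, adj N y x /\ dist N o y = d.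
Proof.
  intros D. pose proof (dist_walk o x) as W. rewrite D in W.
  destruct (walk_S_last N _ _ _ W) as [y [Wy Ayx]]. exists y. split; [exact Ayx |].
  pose proof (dist_min _ _ _ Wy). pose proof (dist_triangle o y x).
  pose proof (dist_adj _ _ Ayx). lia.
Qed.

End Distance.

Lemma ln_le_compat x y : 0 < x -> x <= y -> ln x <= ln y.
Proof. intros Hx [Hxy | ->]; [left; apply ln_increasing |]; lra. Qed.

Lemma exp_le_compat x y : x <= y -> exp x <= exp y.
Proof. intros [Hxy | ->]; [left; apply exp_increasing |]; lra. Qed.

Lemma exp_ge1 x : 0 <= x -> 1 <= exp x.
Proof. intros Hx. rewrite <- exp_0. now apply exp_le_compat. Qed.

Lemma exp_INR_mul n x : exp (INR n * x) = exp x ^ n.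
Proof.
  rewrite <- Rpower_pow by apply exp_pos. unfold Rpower. now rewrite ln_exp.
Qed.

Lemma ln_ln_Rpower_le a b e : 0 <= e -> exp 1 < a -> a <= b ->
  1 < ln a /\ ln a <= ln b /\ Rpower (ln (ln a)) e <= Rpower (ln (ln b)) e.
Proof.
  intros He Ha Hab. pose proof (exp_pos 1).
  assert (La : 1 < ln a) by (rewrite <- (ln_exp 1); apply ln_increasing; lra).
  assert (Lab : ln a <= ln b) by (apply ln_le_compat; lra).
  assert (LLa : 0 < ln (ln a)) by (rewrite <- ln_1; apply ln_increasing; lra).
  repeat split; try assumption.
  apply Rle_Rpower_l; [assumption |]. split; [assumption |]. apply ln_le_compat; lra.
Qed.

Lemma phi_ll_mono ups eps a b : 0 < ups -> 0 < eps -> exp 1 < a -> a <= b ->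
  phi_ll ups eps a <= phi_ll ups eps b.
Proof.
  intros Hu He Ha Hab.
  destruct (ln_ln_Rpower_le a b (1 + eps)) as [La [Lab P]]; try lra.
  assert (0 < Rpower (ln (ln a)) (1 + eps)) by apply exp_pos.
  unfold phi_ll. apply Rmult_le_compat; nra.
Qed.

Lemma phi_ll_ge_ln ups eps a b : 0 < ups -> 0 < eps -> exp 1 < a -> a <= b ->
  ups * Rpower (ln (ln a)) (1 + eps) * ln b <= phi_ll ups eps b.
Proof.
  intros Hu He Ha Hab.
  destruct (ln_ln_Rpower_le a b (1 + eps)) as [La [Lab P]]; try lra.
  unfold phi_ll.
  replace (ups * _ * ln b) with (ups * ln b * Rpower (ln (ln a)) (1 + eps)) by ring.
  apply Rmult_le_compat_l; nra.
Qed.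

Definition sumR {A} (f : A -> R) (l : list A) : R := fold_right Rplus 0 (map f l).

Section Sums.
Context {A : Type}.
Implicit Types (f g : A -> R) (l : list A).

Lemma sumR_app f l1 l2 : sumR f (l1 ++ l2) = sumR f l1 + sumR f l2.
Proof. unfold sumR. induction l1; simpl; [| rewrite IHl1]; lra. Qed.

Lemma sumR_flat_map {B} f (g : B -> list A) (l : list B) :
  sumR f (flat_map g l) = sumR (fun b => sumR f (g b)) l.
Proof. induction l; simpl; [| rewrite sumR_app, IHl]; reflexivity. Qed.

Lemma sumR_map {B} f (g : B -> A) (l : list B) : sumR f (map g l) = sumR (fun b => f (g b)) l.
Proof. unfold sumR. now rewrite map_map. Qed.

Lemma sumR_scal_l f a l : sumR (fun x => a * f x) l = a * sumR f l.
Proof. unfold sumR. induction l; simpl; [| rewrite IHl]; ring. Qed.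

Lemma sumR_le f g l : (forall x, In x l -> f x <= g x) -> sumR f l <= sumR g l.
Proof.
  unfold sumR. induction l as [|a l IH]; simpl; intros H; [lra |].
  pose proof (H a (or_introl eq_refl)). pose proof (IH (fun x h => H x (or_intror h))). lra.
Qed.

Lemma sumR_le_const f l m : (forall x, In x l -> f x <= m) -> sumR f l <= INR (length l) * m.
Proof.
  unfold sumR. induction l as [|a l IH]; cbn [map fold_right length]; intros H; [simpl; lra |].
  pose proof (H a (or_introl eq_refl)). pose proof (IH (fun x h => H x (or_intror h))).
  rewrite S_INR. lra.
Qed.

Lemma sumR_ge_const f l m : (forall x, In x l -> m <= f x) -> INR (length l) * m <= sumR f l.
Proof.
  unfold sumR. induction l as [|a l IH]; cbn [map fold_right length]; intros H; [simpl; lra |].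
  pose proof (H a (or_introl eq_refl)). pose proof (IH (fun x h => H x (or_intror h))).
  rewrite S_INR. lra.
Qed.

Lemma sumR_nonneg f l : (forall x, In x l -> 0 <= f x) -> 0 <= sumR f l.
Proof.
  intros H. pose proof (sumR_ge_const f l 0 H) as G. rewrite Rmult_0_r in G. exact G.
Qed.

Lemma sumR_incl f l L : (forall x, 0 <= f x) -> NoDup l -> incl l L -> sumR f l <= sumR f L.
Proof.
  intros Hf Hl. revert L. induction Hl as [|x l Hx Hl IH]; intros L HlL.
  - apply sumR_nonneg; auto.
  - destruct (in_split x L) as [L1 [L2 ->]]; [apply HlL; now left |].
    assert (Hsub : incl l (L1 ++ L2)).
    { intros y Hy. assert (Hy' : In y (L1 ++ x :: L2)) by (apply HlL; now right).
      apply in_app_or in Hy'. apply in_or_app.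
      destruct Hy' as [| [<- |]]; tauto. }
    specialize (IH _ Hsub). rewrite sumR_app in *. unfold sumR in *. simpl. lra.
Qed.

End Sums.

Lemma sumR_geom q m n : 0 <= q < 1 -> sumR (pow q) (seq m n) <= q ^ m / (1 - q).
Proof.
  intros Hq. revert m. induction n as [|n IH]; intros m; unfold sumR in *; simpl.
  - apply Rmult_le_pos; [apply pow_le | left; apply Rinv_0_lt_compat]; lra.
  - specialize (IH (S m)). simpl in IH.
    assert (q ^ m + q * q ^ m / (1 - q) = q ^ m / (1 - q)) by (field; lra). lra.
Qed.

Definition hub_rate (nstar : nat) (ups eps : R) : R :=
  / (ups * Rpower (ln (ln (INR (S nstar)))) (1 + eps)).

Definition critical_alpha (nstar : nat) (ups eps theta : R) : R :=
  ln (INR nstar) + (3 + 2 * theta) * hub_rate nstar ups eps.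

Lemma hub_rate_pos nstar ups eps : 0 < ups -> 0 < hub_rate nstar ups eps.
Proof. intros Hu. apply Rinv_0_lt_compat, Rmult_lt_0_compat; [exact Hu | apply exp_pos]. Qed.

Lemma exp1_lt_INR nstar : (2 < nstar)%nat -> exp 1 < INR (S nstar).
Proof.
  intros H. pose proof exp_le_3.
  assert (4 <= INR (S nstar)) by (replace 4 with (INR 4) by (simpl; lra); apply le_INR; lia).
  lra.
Qed.

Lemma Rpower_mult_exp z u c : 0 < z -> Rpower (z * exp u) c = Rpower z c * exp (c * u).
Proof.
  intros Hz. rewrite <- Rpower_mult_distr by (auto using exp_pos).
  unfold Rpower at 2. now rewrite ln_exp.
Qed.

Section Hubs.
Variables (nstar : nat) (ups eps : R).
Hypotheses (Hnstar : (2 < nstar)%nat) (Hups : 0 < ups) (Heps : 0 < eps)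
  (Hphi : 1 < phi_ll ups eps (INR (S nstar))).
Context {V : Type} (N : V -> list V) (o : V) (HG : is_graph N)
  (HF : in_family N nstar (phi_ll ups eps)).

Local Notation k := (hub_rate nstar ups eps).

Let k_pos : 0 < k := hub_rate_pos nstar ups eps Hups.

Let nstar_ge1 : 1 <= INR nstar.
Proof. apply (le_INR 1). lia. Qed.

Let exp_k_ge1 : 1 <= exp k.
Proof. apply exp_ge1. lra. Qed.

Let exp_kj_ge1 j : 1 <= exp (k * INR j).
Proof. apply exp_ge1, Rmult_le_pos; [lra | apply pos_INR]. Qed.

Definition hub (y : V) : bool := Nat.ltb nstar (deg N y).

Lemma hub_true y : hub y = true <-> (nstar < deg N y)%nat.
Proof. apply Nat.ltb_lt. Qed.

Lemma hub_false y : hub y = false <-> (deg N y <= nstar)%nat.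
Proof. apply Nat.ltb_ge. Qed.

Lemma hub_deg_pos w : hub w = true -> 0 < INR (deg N w).
Proof. intros Hw. apply lt_0_INR. apply hub_true in Hw. lia. Qed.

Lemma hub_deg_le_exp w y : w <> y -> hub w = true -> hub y = true ->
  INR (deg N w) <= exp (k * INR (dist N w y)).
Proof.
  intros Hne Hw Hy. pose proof (hub_deg_pos w Hw) as Dw.
  apply hub_true in Hw, Hy. pose proof (HF w y Hne Hw Hy) as Hdist.
  set (m := Nat.max (deg N w) (deg N y)) in Hdist.
  assert (Hm : INR (S nstar) <= INR m) by (apply le_INR; unfold m; lia).
  assert (Hlnw : ln (INR (deg N w)) <= ln (INR m))
    by (apply ln_le_compat; [exact Dw | apply le_INR; unfold m; lia]).
  pose proof (phi_ll_ge_ln ups eps _ _ Hups Heps (exp1_lt_INR nstar Hnstar) Hm) as Hln.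
  set (c := ups * Rpower (ln (ln (INR (S nstar)))) (1 + eps)) in Hln.
  assert (Hc : 0 < c) by (apply Rmult_lt_0_compat; [exact Hups | apply exp_pos]).
  rewrite <- (exp_ln (INR (deg N w))) by exact Dw. apply exp_le_compat.
  apply Rmult_le_reg_l with c; [exact Hc |].
  change k with (/ c). rewrite <- Rmult_assoc, Rinv_r by lra. nra.
Qed.

Lemma hubs_not_adj v y : hub v = true -> hub y = true -> ~ adj N v y.
Proof.
  intros Hv Hy Avy. destruct (classic (v = y)) as [<- | Hne].
  - destruct HG as [_ [_ [Hloop _]]]. exact (Hloop v Avy).
  - apply hub_true in Hv, Hy. pose proof (HF v y Hne Hv Hy) as Hdist.
    assert (Hm : INR (S nstar) <= INR (Nat.max (deg N v) (deg N y))) by (apply le_INR; lia).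
    pose proof (phi_ll_mono ups eps _ _ Hups Heps (exp1_lt_INR nstar Hnstar) Hm).
    pose proof (le_INR _ _ (dist_adj N HG v y Avy)). simpl in *. lra.
Qed.

Lemma deg_le_exp_dist_root :
  exists Z, 1 <= Z /\ forall v, INR (deg N v) <= Z * exp (k * INR (dist N o v)).
Proof.
  pose proof nstar_ge1.
  destruct (classic (exists w, hub w = true)) as [[w Hw] | Hnone].
  - set (ew := exp (k * INR (dist N o w))).
    assert (Hew : 0 < ew) by apply exp_pos.
    pose proof (hub_deg_pos w Hw) as Degw.
    exists (INR nstar + INR (deg N w) + ew). split; [lra |]. intros v.
    pose proof (exp_kj_ge1 (dist N o v)).
    destruct (hub v) eqn:Hv; [destruct (classic (v = w)) as [-> | Hne] |].
    + nra.
    + pose proof (hub_deg_le_exp v w Hne Hv Hw).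
      assert (T : (dist N v w <= dist N o v + dist N o w)%nat).
      { rewrite (dist_sym N HG o v). apply dist_triangle; exact HG. }
      apply le_INR in T. rewrite plus_INR in T.
      assert (exp (k * INR (dist N v w)) <= exp (k * INR (dist N o v)) * ew)
        by (unfold ew; rewrite <- exp_plus; apply exp_le_compat; nra).
      nra.
    + apply hub_false, le_INR in Hv. pose proof (pos_INR (deg N w)). nra.
  - exists (INR nstar). split; [lra |]. intros v.
    assert (Hv : hub v = false) by (destruct (hub v) eqn:E; [exfalso; eauto | reflexivity]).
    apply hub_false, le_INR in Hv.
    pose proof (exp_kj_ge1 (dist N o v)). nra.
Qed.

Definition hub_div (v : V) : R := if hub v then INR (deg N v) else 1.

Definition children (d : nat) (v : V) : list V :=
  filter (fun y => Nat.eqb (dist N o y) (S d)) (N v).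

Definition child_weights (d : nat) (p : V * R) : list (V * R) :=
  map (fun y => (y, if hub y then 1 else exp k * snd p / hub_div (fst p)))
      (children d (fst p)).

(* [layer d] lists every vertex at distance [d] from [o] once per shortest path to it, each
   copy with its own weight. *)
Fixpoint layer (d : nat) : list (V * R) :=
  match d with
  | O => (o, 1) :: nil
  | S d' => flat_map (child_weights d') (layer d')
  end.

(* The last clause remembers the most recent hub [w] above [v]: its division by n(w) has since
   been compensated by a factor e^k per step. *)
Definition layer_inv (d : nat) (v : V) (psi : R) : Prop :=
  dist N o v = d /\ 0 < psi /\ (hub v = true -> psi = 1) /\
  (1 <= psi \/ exists w s, hub w = true /\ (dist N o w <= d)%nat /\
     (dist N w v <= s)%nat /\ exp (k * INR s) / INR (deg N w) <= psi).

Lemma children_spec d v y : In y (children d v) <-> adj N v y /\ dist N o y = S d.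
Proof. unfold children. rewrite filter_In, Nat.eqb_eq. reflexivity. Qed.

Lemma hub_child_weight d v psi y : layer_inv d v psi -> In y (children d v) ->
  hub y = true -> 1 <= exp k * psi.
Proof.
  intros [Dv [Hpsi [_ Hlow]]] Hy Hhy. apply children_spec in Hy as [Avy Dy].
  pose proof exp_k_ge1 as Ek.
  destruct Hlow as [Hlow | [w [s [Hw [Dw [Dwv Hpsi_w]]]]]]; [nra |].
  assert (Hne : w <> y) by (intros ->; lia).
  pose proof (hub_deg_pos w Hw) as Degw.
  assert (T : (dist N w y <= S s)%nat)
    by (pose proof (dist_triangle N HG w v y); pose proof (dist_adj N HG v y Avy); lia).
  apply le_INR in T. rewrite S_INR in T.
  assert (Hdeg : INR (deg N w) <= exp k * exp (k * INR s)).
  { eapply Rle_trans; [apply (hub_deg_le_exp w y Hne Hw Hhy) |].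
    rewrite <- exp_plus. apply exp_le_compat. nra. }
  assert (Hs : exp (k * INR s) <= psi * INR (deg N w)).
  { apply (Rmult_le_compat_r (INR (deg N w))) in Hpsi_w; [| lra].
    unfold Rdiv in Hpsi_w. rewrite Rmult_assoc, Rinv_l, Rmult_1_r in Hpsi_w; lra. }
  apply Rmult_le_reg_r with (INR (deg N w)); [exact Degw |]. nra.
Qed.

Lemma child_weight_inv d u phi v : layer_inv d u phi -> In v (children d u) ->
  layer_inv (S d) v (if hub v then 1 else exp k * phi / hub_div u).
Proof.
  intros Hu Hv. pose proof Hu as [Du [Hphi0 [Hhub Hlow]]].
  apply children_spec in Hv as [Auv Dv].
  pose proof exp_k_ge1 as Ek.
  destruct (hub v) eqn:Hhv; [repeat split; auto; lra |].
  repeat split; [exact Dv | | congruence |]; unfold hub_div; destruct (hub u) eqn:Hhu.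
  - rewrite (Hhub eq_refl). apply Rdiv_lt_0_compat; [lra | now apply hub_deg_pos].
  - rewrite Rdiv_1_r. nra.
  - right. exists u, 1%nat. rewrite (Hhub eq_refl). repeat split; [auto | lia | | ].
    + now apply dist_adj.
    + simpl INR. rewrite Rmult_1_r. lra.
  - rewrite Rdiv_1_r. destruct Hlow as [Hlow | [w [s [Hw [Dw [Dwu Hpsi_w]]]]]]; [left; nra |].
    right. exists w, (S s). repeat split; [auto | lia | |].
    + pose proof (dist_triangle N HG w u v). pose proof (dist_adj N HG u v Auv). lia.
    + rewrite S_INR, Rmult_plus_distr_l, Rmult_1_r, exp_plus.
      unfold Rdiv in *. rewrite (Rmult_comm (exp (k * INR s))), Rmult_assoc.
      apply Rmult_le_compat_l; lra.
Qed.

Lemma layer_inv_holds d v psi : In (v, psi) (layer d) -> layer_inv d v psi.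
Proof.
  revert v psi. induction d as [|d IH]; intros v psi Hin; simpl in Hin.
  - destruct Hin as [[= <- <-] | []].
    repeat split; [apply dist_refl; exact HG | lra | left; lra].
  - apply in_flat_map in Hin as [[u phi] [Hu Hv]].
    unfold child_weights in Hv. apply in_map_iff in Hv as [y [[= <- <-] Hy]].
    exact (child_weight_inv d u phi y (IH u phi Hu) Hy).
Qed.

Lemma layer_covers d x : dist N o x = d -> exists psi, In (x, psi) (layer d).
Proof.
  revert x. induction d as [|d IH]; intros x Dx.
  - exists 1. apply dist_eq0 in Dx; [| exact HG]. subst x. now left.
  - destruct (dist_S_pred N HG o x d Dx) as [y [Ayx Dy]].
    destruct (IH y Dy) as [psi Hy]. eexists. simpl. apply in_flat_map.
    exists (y, psi). split; [exact Hy |]. apply in_map_iff. exists x. split; [reflexivity |].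
    now apply children_spec.
Qed.

Lemma child_weights_sum d v psi : layer_inv d v psi ->
  sumR snd (child_weights d (v, psi)) <= INR nstar * exp k * psi.
Proof.
  intros Hv. pose proof Hv as [_ [Hpsi [Hhub _]]].
  unfold child_weights. rewrite sumR_map. cbn [fst snd].
  pose proof exp_k_ge1 as Ek.
  assert (Hlen : (length (children d v) <= deg N v)%nat) by apply filter_length_le.
  unfold hub_div. destruct (hub v) eqn:Hhv.
  - rewrite (Hhub eq_refl). pose proof (hub_deg_pos v Hhv) as Degv.
    eapply Rle_trans; [apply sumR_le_const with (m := exp k * 1 / INR (deg N v)) |].
    { intros y Hy. apply children_spec in Hy as [Avy _].
      destruct (hub y) eqn:Hhy; [exfalso; exact (hubs_not_adj v y Hhv Hhy Avy) | lra]. }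
    apply le_INR in Hlen.
    apply Rle_trans with (INR (deg N v) * (exp k * 1 / INR (deg N v))).
    + apply Rmult_le_compat_r; [| exact Hlen]. apply Rlt_le, Rdiv_lt_0_compat; lra.
    + replace (INR (deg N v) * (exp k * 1 / INR (deg N v))) with (exp k) by (field; lra).
      pose proof nstar_ge1. nra.
  - eapply Rle_trans; [apply sumR_le_const with (m := exp k * psi) |].
    { intros y Hy. destruct (hub y) eqn:Hhy.
      - eapply hub_child_weight; eauto.
      - rewrite Rdiv_1_r. lra. }
    apply hub_false in Hhv.
    assert (INR (length (children d v)) <= INR nstar) by (apply le_INR; lia).
    assert (0 <= exp k * psi) by nra.
    nra.
Qed.

Lemma layer_weight_sum d : sumR snd (layer d) <= (INR nstar * exp k) ^ d.
Proof.
  induction d as [|d IH]; [unfold sumR; simpl; lra |].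
  simpl layer. rewrite sumR_flat_map.
  eapply Rle_trans.
  { apply sumR_le with (g := fun p => INR nstar * exp k * snd p).
    intros [v psi] Hp. apply child_weights_sum, layer_inv_holds, Hp. }
  rewrite sumR_scal_l. simpl. apply Rmult_le_compat_l; [| exact IH].
  apply Rmult_le_pos; [apply pos_INR | apply Rlt_le, exp_pos].
Qed.

Section DegreeScale.
Variable Z : R.
Hypotheses (HZ : 1 <= Z)
  (HdegZ : forall v, INR (deg N v) <= Z * exp (k * INR (dist N o v))).

Lemma deg_le_scale v j : (dist N o v <= j)%nat -> INR (deg N v) <= Z * exp (k * INR j).
Proof.
  intros Hj. eapply Rle_trans; [apply HdegZ |]. apply Rmult_le_compat_l; [lra |].
  apply exp_le_compat, Rmult_le_compat_l; [lra | now apply le_INR].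
Qed.

Lemma layer_weight_ge d v psi : In (v, psi) (layer d) -> / (Z * exp (k * INR d)) <= psi.
Proof.
  intros Hin. destruct (layer_inv_holds d v psi Hin) as [_ [_ [_ Hlow]]].
  pose proof (exp_kj_ge1 d) as E.
  assert (HD : 1 <= Z * exp (k * INR d)) by nra.
  destruct Hlow as [Hlow | [w [s [Hw [Dw [_ Hpsi_w]]]]]].
  - apply Rle_trans with 1; [| exact Hlow]. rewrite <- Rinv_1. apply Rinv_le_contravar; lra.
  - pose proof (hub_deg_pos w Hw) as Degw.
    pose proof (exp_kj_ge1 s) as Es.
    apply Rle_trans with (/ INR (deg N w)).
    + apply Rinv_le_contravar; [exact Degw | now apply deg_le_scale].
    + eapply Rle_trans; [| exact Hpsi_w]. unfold Rdiv.
      pose proof (Rinv_0_lt_compat _ Degw). nra.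
Qed.

Lemma layer_length_le d :
  INR (length (layer d)) <= Z * exp ((ln (INR nstar) + 2 * k) * INR d).
Proof.
  assert (HD : 0 < Z * exp (k * INR d)) by (pose proof (exp_pos (k * INR d)); nra).
  assert (Hge : INR (length (layer d)) * / (Z * exp (k * INR d)) <= sumR snd (layer d)).
  { apply sumR_ge_const. intros [v psi]. apply layer_weight_ge. }
  pose proof (layer_weight_sum d) as Hsum.
  replace (INR nstar * exp k) with (exp (ln (INR nstar) + k)) in Hsum
    by (rewrite exp_plus, exp_ln; [reflexivity | lra]).
  rewrite <- exp_INR_mul in Hsum.
  replace (INR (length (layer d)))
    with (INR (length (layer d)) * / (Z * exp (k * INR d)) * (Z * exp (k * INR d)))
    by (rewrite Rmult_assoc, Rinv_l by lra; ring).
  eapply Rle_trans; [apply Rmult_le_compat_r; [lra | exact (Rle_trans _ _ _ Hge Hsum)] |].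
  right. rewrite Rmult_comm, Rmult_assoc, <- exp_plus. f_equal. f_equal. ring.
Qed.

Lemma Theta_term_le theta alpha x : 0 < theta ->
  Theta_term N o alpha theta x <=
  Rpower Z (1 + 2 * theta) *
  exp ((1 + 2 * theta) * (k * INR (S (dist N o x))) - alpha * INR (dist N o x)).
Proof.
  intros Ht. set (d := dist N o x). set (D := Z * exp (k * INR (S d))).
  assert (HD : 1 <= D) by (pose proof (exp_kj_ge1 (S d)); unfold D; nra).
  change (Theta_term N o alpha theta x) with
    (sumR (fun y => Rpower (INR (deg N x * deg N y)) theta * exp (- alpha * INR d)) (N x)).
  assert (Hx : INR (deg N x) <= D) by (apply deg_le_scale; unfold d; lia).
  eapply Rle_trans;
    [apply sumR_le_const with (m := Rpower (D * D) theta * exp (- alpha * INR d)) |].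
  - intros y Hy. apply Rmult_le_compat_r; [apply Rlt_le, exp_pos |].
    assert (Hyx : adj N y x) by (apply HG; exact Hy).
    assert (Degx : (1 <= deg N x)%nat) by (unfold deg; destruct (N x); [destruct Hy | simpl; lia]).
    assert (Degy : (1 <= deg N y)%nat)
      by (unfold deg, adj in *; destruct (N y); [destruct Hyx | simpl; lia]).
    assert (Hy' : INR (deg N y) <= D).
    { apply deg_le_scale. pose proof (dist_triangle N HG o x y). pose proof (dist_adj N HG x y Hy).
      unfold d. lia. }
    apply le_INR in Degx, Degy. simpl in Degx, Degy.
    apply Rle_Rpower_l; [lra |]. rewrite mult_INR. split; [nra | apply Rmult_le_compat; lra].
  - assert (HP : D * Rpower (D * D) theta = Rpower D (1 + 2 * theta)).
    { rewrite <- Rpower_mult_distr, <- (Rpower_1 D) at 1 by lra.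
      rewrite <- !Rpower_plus. f_equal. ring. }
    eapply Rle_trans.
    { apply Rmult_le_compat_r; [| exact Hx].
      apply Rmult_le_pos; apply Rlt_le, exp_pos. }
    right. rewrite <- Rmult_assoc, HP. unfold D. rewrite Rpower_mult_exp by lra.
    rewrite Rmult_assoc, <- exp_plus. do 2 f_equal. ring.
Qed.

Lemma layer_Theta_sum_le theta alpha d : 0 < theta ->
  sumR (fun p => Theta_term N o alpha theta (fst p)) (layer d) <=
  Z * Rpower Z (1 + 2 * theta) * exp ((1 + 2 * theta) * k) *
  exp (critical_alpha nstar ups eps theta - alpha) ^ d.
Proof.
  intros Ht.
  eapply Rle_trans.
  { apply sumR_le_const with (m := Rpower Z (1 + 2 * theta) *
      exp ((1 + 2 * theta) * (k * INR (S d)) - alpha * INR d)).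
    intros [v psi] Hp. destruct (layer_inv_holds d v psi Hp) as [Dv _]. simpl fst.
    rewrite <- Dv. now apply Theta_term_le. }
  eapply Rle_trans.
  { apply Rmult_le_compat_r; [| apply layer_length_le].
    apply Rmult_le_pos; apply Rlt_le, exp_pos. }
  right. rewrite <- exp_INR_mul.
  assert (E : exp ((ln (INR nstar) + 2 * k) * INR d) *
              exp ((1 + 2 * theta) * (k * INR (S d)) - alpha * INR d) =
              exp ((1 + 2 * theta) * k) *
              exp (INR d * (critical_alpha nstar ups eps theta - alpha))).
  { rewrite <- !exp_plus. f_equal. unfold critical_alpha. rewrite S_INR. ring. }
  transitivity (Z * Rpower Z (1 + 2 * theta) *
    (exp ((ln (INR nstar) + 2 * k) * INR d) *
     exp ((1 + 2 * theta) * (k * INR (S d)) - alpha * INR d))); [ring |].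
  rewrite E. ring.
Qed.

End DegreeScale.

Lemma Theta_finite_above_critical theta alpha : 0 < theta ->
  critical_alpha nstar ups eps theta < alpha -> Theta_finite N o alpha theta.
Proof.
  intros Ht Ha. destruct deg_le_exp_dist_root as [Z [HZ HdegZ]].
  set (q := exp (critical_alpha nstar ups eps theta - alpha)).
  set (C := Z * Rpower Z (1 + 2 * theta) * exp ((1 + 2 * theta) * k)).
  assert (Hq : 0 <= q < 1).
  { split; [apply Rlt_le, exp_pos |]. rewrite <- exp_0. apply exp_increasing. lra. }
  assert (HC : 0 <= C).
  { apply Rmult_le_pos; [apply Rmult_le_pos; [lra |] |]; apply Rlt_le, exp_pos. }
  exists (C / (1 - q)). intros l Hl.
  change (sumR (Theta_term N o alpha theta) l <= C / (1 - q)).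
  set (m := list_max (map (dist N o) l)).
  apply Rle_trans with
    (sumR (Theta_term N o alpha theta) (flat_map (fun d => map fst (layer d)) (seq 0 (S m)))).
  - apply sumR_incl; [| exact Hl |].
    { intros x. apply sumR_nonneg. intros y _. apply Rmult_le_pos; apply Rlt_le, exp_pos. }
    intros x Hx. apply in_flat_map. exists (dist N o x). split.
    + apply in_seq. assert (Hm : (dist N o x <= m)%nat).
      { pose proof (proj1 (list_max_le _ _) (Nat.le_refl m)) as Hall.
        rewrite Forall_forall in Hall. apply Hall, in_map, Hx. }
      lia.
    + destruct (layer_covers (dist N o x) x eq_refl) as [psi Hp].
      apply in_map_iff. now exists (x, psi).
  - rewrite sumR_flat_map.
    eapply Rle_trans.
    { apply sumR_le with (g := fun d => C * q ^ d). intros d _.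
      rewrite sumR_map. now apply layer_Theta_sum_le. }
    rewrite sumR_scal_l. pose proof (sumR_geom q 0 (S m) Hq) as G.
    unfold Rdiv in *. rewrite pow_O, Rmult_1_l in G. now apply Rmult_le_compat_l.
Qed.

End Hubs.

Lemma critical_alpha_nonneg nstar ups eps theta : (1 <= nstar)%nat -> 0 < ups -> 0 < theta ->
  0 <= critical_alpha nstar ups eps theta.
Proof.
  intros Hn Hu Ht. unfold critical_alpha. pose proof (hub_rate_pos nstar ups eps Hu).
  assert (0 <= ln (INR nstar)).
  { rewrite <- ln_1. apply ln_le_compat; [lra | apply (le_INR 1); lia]. }
  nra.
Qed.

Theorem theorem5p2 :
  forall (nstar : nat) (upsilon eps theta : R),
    (2 < nstar)%nat -> 0 < upsilon -> 0 < eps ->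
    1 < phi_ll upsilon eps (INR (S nstar)) ->
    0 < theta ->
    exists alpha0 : R, 0 <= alpha0 /\
      forall (V : Type) (N : V -> list V) (o : V),
        is_graph N ->
        in_family N nstar (phi_ll upsilon eps) ->
        forall alpha : R, alpha0 < alpha -> Theta_finite N o alpha theta.
Proof.
  intros nstar ups eps theta Hn Hu He Hphi Ht.
  exists (critical_alpha nstar ups eps theta). split.
  - apply critical_alpha_nonneg; [lia | assumption..].
  - intros V N o HG HF alpha Ha. now apply (Theta_finite_above_critical nstar ups eps).
Qed.
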